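(* Let $\alpha\in\mathbb C$ and let $u(k),v(k),f(k),g(k)$, $k\ge0$, be defined by $u(0)=v(0)=0$, $f(0)=g(0)=1$ and, for $k\ge1$, $u(k)=u(k-1)+f(k-1)$, $v(k)=v(k-1)+g(k-1)$, $f(k)=\frac{u(k)}{v(k)}g(k-1)$, $g(k)=\frac{\alpha v(k)}{k-\alpha u(k)/f(k-1)-\alpha v(k)/g(k-1)}$. Put $h(k)=(f(k)g(k))^{-1}$ and $w(0)=0$, $w(k)=w(k-1)+h(k-1)$ for $k\ge1$. Then, for all $k$ such that the arguments are nonnegative integers, $$w(3k-1)=\frac{k-1+2\alpha}{1-2\alpha}\Pi_3(k),\quad w(3k)=\frac{k}{1-2\alpha}\Pi_3(k),\quad w(3k+1)=\frac{k+1-2\alpha}{1-2\alpha}\Pi_3(k),$$ $$h(3k-1)=h(3k)=\Pi_3(k),\qquad h(3k+1)=\frac{k+1-2\alpha}{k+\alpha}\Pi_3(k),$$ where $$\Pi_3(k)=\frac{(1-\alpha)(2-\alpha)\cdots(k-\alpha)}{\alpha(1+\alpha)\cdots(k-1+\alpha)}\cdot\frac{(1-2\alpha)(2-2\alpha)\cdots(k-2\alpha)}{2\alpha(1+2\alpha)\cdots(k-1+2\alpha)}.$$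
   Context: Empty products equal $1$ (so $\Pi_3(0)=1$). The parameter $\alpha$ is such that all denominators occurring are nonzero. *)

From HB Require Import structures.
From mathcomp Require Import all_boot all_order all_algebra.
Set Implicit Arguments. Unset Strict Implicit. Unset Printing Implicit Defensive.
Import Order.TTheory GRing.Theory Num.Theory.
Local Open Scope ring_scope.

(* Scalars: any numeric algebraically closed field C (e.g. the complex numbers). *)
Section Seqs.
Variable C : numClosedFieldType.
Variable a : C.

Fixpoint ufvg (k : nat) : C * C * C * C :=
  match k with
  | 0 => (0, 0, 1, 1)
  | k'.+1 =>
      let: (u, v, f, g) := ufvg k' in
      let u' := u + f in
      let v' := v + g in
      let f' := u' / v' * g in
      let g' := a * v' / (k'.+1%:R - a * u' / f - a * v' / g) in
      (u', v', f', g')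
  end.

Definition useq k := (ufvg k).1.1.1.
Definition vseq k := (ufvg k).1.1.2.
Definition fseq k := (ufvg k).1.2.
Definition gseq k := (ufvg k).2.

Definition hseq k := (fseq k * gseq k)^-1.

Fixpoint wseq (k : nat) : C :=
  match k with 0 => 0 | k'.+1 => wseq k' + hseq k' end.

Definition Pi3 (k : nat) : C :=
  (\prod_(i < k) (i.+1%:R - a)) / (\prod_(i < k) (a + i%:R)) *
  ((\prod_(i < k) (i.+1%:R - 2 * a)) / (\prod_(i < k) (2 * a + i%:R))).
End Seqs.

From HB Require Import structures.
From mathcomp Require Import all_boot all_order all_algebra.
From mathcomp Require Import ring.
Set Implicit Arguments.
Unset Strict Implicit.
Unset Printing Implicit Defensive.
Import Order.TTheory GRing.Theory Num.Theory.
Local Open Scope ring_scope.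

(* The recursion is 3-periodic up to rescaling.  At n = 3k one has
   a u(3k) = k f(3k) and a v(3k) = k g(3k); from such a state the next three
   steps multiply g by (k+a)/(k+1-2a), then f by (k+2a)/(k+1-a), then nothing,
   and the invariant holds again at 3(k+1).  Hence h(3k) is a product of these
   factors, which is Pi_3(k), and summing h over one period gives w. *)

Ltac field_nz := field; do ?[apply/andP; split].

Section Recurrence.
Variables (C : numClosedFieldType) (a : C).

Lemma ufvgS k : ufvg a k.+1 =
  (useq a k + fseq a k, vseq a k + gseq a k,
   (useq a k + fseq a k) / (vseq a k + gseq a k) * gseq a k,
   a * (vseq a k + gseq a k) /
     (k.+1%:R - a * (useq a k + fseq a k) / fseq a k
              - a * (vseq a k + gseq a k) / gseq a k)).
Proof. by rewrite /useq /vseq /fseq /gseq /=; case: (ufvg a k) => [[[u v] f] g]. Qed.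

Lemma useqS k : useq a k.+1 = useq a k + fseq a k.
Proof. by rewrite {1}/useq ufvgS. Qed.

Lemma vseqS k : vseq a k.+1 = vseq a k + gseq a k.
Proof. by rewrite {1}/vseq ufvgS. Qed.

Lemma fseqS k : fseq a k.+1 = useq a k.+1 / vseq a k.+1 * gseq a k.
Proof. by rewrite {1}/fseq ufvgS useqS vseqS. Qed.

Lemma gseqS k : gseq a k.+1 = a * vseq a k.+1 /
  (k.+1%:R - a * useq a k.+1 / fseq a k - a * vseq a k.+1 / gseq a k).
Proof. by rewrite {1}/gseq ufvgS useqS vseqS. Qed.

Lemma wseqS k : wseq a k.+1 = wseq a k + hseq a k.
Proof. by []. Qed.

Lemma Pi3S k : Pi3 a k.+1 =
  (k.+1%:R - a) / (a + k%:R) * ((k.+1%:R - 2 * a) / (2 * a + k%:R)) * Pi3 a k.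
Proof. by rewrite /Pi3 !big_ord_recr /= !invfM; ring. Qed.

Lemma mul3S k : (3 * k.+1 = (3 * k).+3)%N.
Proof. by rewrite mulnSr addn3. Qed.

Hypothesis hf : forall k, fseq a k != 0.
Hypothesis hg : forall k, gseq a k != 0.
Hypothesis hD : forall k, (0 < k)%N ->
  k%:R - a * useq a k / fseq a k.-1 - a * vseq a k / gseq a k.-1 != 0.
Hypothesis ha : forall j : nat, a + j%:R != 0.
Hypothesis h2a : forall j : nat, 2 * a + j%:R != 0.
Hypothesis h12 : 1 - 2 * a != 0.

Lemma a_neq0 : a != 0.
Proof. by have := ha 0; rewrite addr0. Qed.

Lemma natr_add_a_neq0 k : k%:R + a != 0.
Proof. by rewrite addrC. Qed.

Lemma natr_add_2a_neq0 k : k%:R + 2 * a != 0.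
Proof. by rewrite addrC. Qed.

Local Hint Resolve a_neq0 natr_add_a_neq0 natr_add_2a_neq0 : core.

Section Period.
Variables (k : nat) (f g : C).
Hypotheses (Ef : fseq a (3 * k) = f) (Eg : gseq a (3 * k) = g).
Hypotheses (hu : useq a (3 * k) = k%:R * f / a) (hv : vseq a (3 * k) = k%:R * g / a).

Local Notation f' := (f * (k%:R + 2 * a) / (k%:R + 1 - a)).
Local Notation g' := (g * (k%:R + a) / (k%:R + 1 - 2 * a)).

Let f_neq0 : f != 0. Proof. by rewrite -Ef. Qed.
Let g_neq0 : g != 0. Proof. by rewrite -Eg. Qed.

Lemma period_step1 :
  [/\ k%:R + 1 - 2 * a != 0,
      useq a (3 * k).+1 = (k%:R + a) * f / a,
      vseq a (3 * k).+1 = (k%:R + a) * g / a,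
      fseq a (3 * k).+1 = f &
      gseq a (3 * k).+1 = g'].
Proof.
have u1 : useq a (3 * k).+1 = (k%:R + a) * f / a by rewrite useqS hu Ef; field_nz.
have v1 : vseq a (3 * k).+1 = (k%:R + a) * g / a by rewrite vseqS hv Eg; field_nz.
have D1 : (3 * k).+1%:R - a * useq a (3 * k).+1 / f
            - a * vseq a (3 * k).+1 / g = k%:R + 1 - 2 * a.
  by rewrite u1 v1; field_nz.
have D1_neq0 : k%:R + 1 - 2 * a != 0.
  by have := hD (ltn0Sn (3 * k)); rewrite Ef Eg D1.
split=> //; first by rewrite fseqS u1 v1 Eg; field_nz.
by rewrite gseqS Ef Eg D1 v1; field_nz.
Qed.

Lemma period_step2 :
  [/\ k%:R + 1 - a != 0,
      useq a (3 * k).+2 = (k%:R + 2 * a) * f / a,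
      vseq a (3 * k).+2 = (k%:R + 1 - a) * g' / a,
      fseq a (3 * k).+2 = f' &
      gseq a (3 * k).+2 = g'].
Proof.
have [D1_neq0 u1 v1 f1 g1] := period_step1.
have u2 : useq a (3 * k).+2 = (k%:R + 2 * a) * f / a by rewrite useqS u1 f1; field_nz.
have v2 : vseq a (3 * k).+2 = (k%:R + 1 - a) * g' / a by rewrite vseqS v1 g1; field_nz.
have D2 : (3 * k).+2%:R - a * useq a (3 * k).+2 / fseq a (3 * k).+1
            - a * vseq a (3 * k).+2 / gseq a (3 * k).+1 = k%:R + 1 - a.
  by rewrite u2 v2 f1 g1; field_nz.
have D2_neq0 : k%:R + 1 - a != 0 by have := hD (ltn0Sn (3 * k).+1); rewrite D2.
split=> //; first by rewrite fseqS u2 v2 g1; field_nz.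
by rewrite gseqS D2 v2; field_nz.
Qed.

Lemma period_step3 :
  [/\ fseq a (3 * k).+3 = f',
      gseq a (3 * k).+3 = g',
      useq a (3 * k).+3 = k.+1%:R * f' / a &
      vseq a (3 * k).+3 = k.+1%:R * g' / a].
Proof.
have [D1_neq0 _ _ _ _] := period_step1.
have [D2_neq0 u2 v2 f2 g2] := period_step2.
have u3 : useq a (3 * k).+3 = k.+1%:R * f' / a by rewrite useqS u2 f2; field_nz.
have v3 : vseq a (3 * k).+3 = k.+1%:R * g' / a by rewrite vseqS v2 g2; field_nz.
have k1_neq0 : 1 + k%:R != 0 :> C by rewrite addrC natr1 pnatr_eq0.
have D3 : (3 * k).+3%:R - a * useq a (3 * k).+3 / fseq a (3 * k).+2
            - a * vseq a (3 * k).+3 / gseq a (3 * k).+2 = k.+1%:R.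
  by rewrite u3 v3 f2 g2; field_nz.
split=> //; first by rewrite fseqS u3 v3 g2; field_nz.
by rewrite gseqS D3 v3; field_nz.
Qed.

End Period.

Lemma period_invariant k :
  useq a (3 * k) = k%:R * fseq a (3 * k) / a /\
  vseq a (3 * k) = k%:R * gseq a (3 * k) / a.
Proof.
elim: k => [|k [hu hv]]; first by rewrite !mul0r.
have [f3 g3 u3 v3] := period_step3 erefl erefl hu hv.
by rewrite mul3S f3 g3.
Qed.

Lemma hseq_period k :
  [/\ hseq a (3 * k).+1 = (k%:R + 1 - 2 * a) / (k%:R + a) * hseq a (3 * k),
      hseq a (3 * k).+2 = (k%:R + 1 - a) / (k%:R + 2 * a) * hseq a (3 * k).+1 &
      hseq a (3 * k).+3 = hseq a (3 * k).+2].
Proof.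
have [hu hv] := period_invariant k.
have [D1_neq0 _ _ f1 g1] := period_step1 erefl erefl hu hv.
have [D2_neq0 _ _ f2 g2] := period_step2 erefl erefl hu hv.
have [f3 g3 _ _] := period_step3 erefl erefl hu hv.
rewrite /hseq f1 g1 f2 g2 f3 g3.
(* [field] would unfold [fseq] and [gseq] in its side conditions. *)
have := hf (3 * k); have := hg (3 * k).
move: (fseq a (3 * k)) (gseq a (3 * k)) => f g g_neq0 f_neq0.
by split; field_nz.
Qed.

Lemma hseq_3k k : hseq a (3 * k) = Pi3 a k.
Proof.
elim: k => [|k IH]; first by rewrite /Pi3 !big_ord0 /hseq /= !(mulr1, invr1).
have [h1 h2 h3] := hseq_period k.
by rewrite mul3S h3 h2 h1 IH Pi3S; field_nz.
Qed.

Lemma hseq_3k1 k : hseq a (3 * k).+1 = (k%:R + 1 - 2 * a) / (k%:R + a) * Pi3 a k.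
Proof. by have [-> _ _] := hseq_period k; rewrite hseq_3k. Qed.

Lemma hseq_3k2 k : hseq a (3 * k).+2 = Pi3 a k.+1.
Proof. by have [_ _ <-] := hseq_period k; rewrite -mul3S hseq_3k. Qed.

Lemma wseq_3k k : wseq a (3 * k) = k%:R / (1 - 2 * a) * Pi3 a k.
Proof.
elim: k => [|k IH]; first by rewrite !mul0r.
rewrite mul3S !wseqS IH hseq_3k2 hseq_3k1 hseq_3k Pi3S.
by field_nz.
Qed.

Lemma wseq_3k1 k : wseq a (3 * k).+1 = (k%:R + 1 - 2 * a) / (1 - 2 * a) * Pi3 a k.
Proof. by rewrite wseqS wseq_3k hseq_3k; field_nz. Qed.

Lemma wseq_3k2 k : wseq a (3 * k).+2 = (k%:R + 2 * a) / (1 - 2 * a) * Pi3 a k.+1.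
Proof.
apply: (addIr (hseq a (3 * k).+2)).
by rewrite -wseqS -mul3S wseq_3k hseq_3k2; field_nz.
Qed.

End Recurrence.

Theorem corollary24 (C : numClosedFieldType) (a : C)
  (* all denominators occurring in the recursions are nonzero *)
  (hv : forall k, (0 < k)%N -> vseq a k != 0)
  (hf : forall k, fseq a k != 0)
  (hg : forall k, gseq a k != 0)
  (hD : forall k, (0 < k)%N ->
          k%:R - a * useq a k / fseq a k.-1 - a * vseq a k / gseq a k.-1 != 0)
  (* all denominators occurring in the closed formulas are nonzero *)
  (h12 : 1 - 2 * a != 0)
  (ha : forall j : nat, a + j%:R != 0)
  (h2a : forall j : nat, 2 * a + j%:R != 0) :
  forall k : nat,
    [/\ ((0 < k)%N ->
          wseq a (3 * k).-1 = (k%:R - 1 + 2 * a) / (1 - 2 * a) * Pi3 a k),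
        wseq a (3 * k) = k%:R / (1 - 2 * a) * Pi3 a k &
        wseq a (3 * k).+1 = (k%:R + 1 - 2 * a) / (1 - 2 * a) * Pi3 a k] /\
    [/\ ((0 < k)%N -> hseq a (3 * k).-1 = Pi3 a k),
        hseq a (3 * k) = Pi3 a k &
        hseq a (3 * k).+1 = (k%:R + 1 - 2 * a) / (k%:R + a) * Pi3 a k].
Proof.
move=> k; split; split.
- case: k => // k _.
  by rewrite mul3S (wseq_3k2 hf hg hD ha h2a h12) -[k.+1%:R]natr1 addrK.
- exact: (wseq_3k hf hg hD ha h2a h12).
- exact: (wseq_3k1 hf hg hD ha h2a h12).
- by case: k => // k _; rewrite mul3S (hseq_3k2 hf hg hD ha h2a).
- exact: (hseq_3k hf hg hD ha h2a).
- exact: (hseq_3k1 hf hg hD ha h2a).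
Qed.
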